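(* Let $a,b,c,\alpha,\beta,\gamma,\lambda\in\mathbb{R}$ with $\alpha=0$ whenever $\gamma\neq 0$, and let $\Omega\subset\mathbb{R}$ be a compact interval containing $0$ in its interior. Consider the one-input control-affine system on $\mathbb{R}^2$ (coordinates $(s,t)$) $$\dot s=\beta s+\omega b,\qquad \dot t=(\lambda+\beta)t+\tfrac12\alpha s^2+\gamma s+\omega(c+as),\qquad \omega\in\Omega,$$ i.e. with drift $f_0(s,t)=\big(\beta s,(\lambda+\beta)t+\tfrac12\alpha s^2+\gamma s\big)$ and control vector field $f_1(s,t)=(b,c+as)$. Then this system satisfies the Lie algebra rank condition if and only if $$b\cdot\Big(\big(b\alpha+a(\lambda-\beta)\big)^2+\big(b\gamma+c\lambda\big)^2\Big)\neq 0.$$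
   Context: A control-affine system $\dot x=f_0(x)+\omega f_1(x)$ on a manifold $M$ satisfies the Lie algebra rank condition (LARC) if the smallest Lie algebra of vector fields containing $f_0$ and $f_1$, evaluated at each point $x\in M$, spans the tangent space $T_xM$. This system is the linear control system induced on the homogeneous space $(\mathbb{R}\mathbf e_1\times\{0\})\backslash\mathbb{H}\simeq\mathbb{R}^2$ of the 3-dimensional Heisenberg group. *)

From HB Require Import structures.
From mathcomp Require Import all_boot all_order all_algebra.
From mathcomp Require Import mpoly.
From mathcomp Require Import reals.
Set Implicit Arguments. Unset Strict Implicit. Unset Printing Implicit Defensive.
Import Order.TTheory GRing.Theory Num.Theory.
Local Open Scope ring_scope.

(* A polynomial vector field on R^2 (coordinates x_0 = s, x_1 = t):
   its two component functions, as polynomials in s, t. *)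
Definition vfield (R : ringType) := 'I_2 -> {mpoly R[2]}.

Definition lie_bracket (R : ringType) (X Y : vfield R) : vfield R :=
  fun i => \sum_(j < 2) (X j * mderiv j (Y i) - Y j * mderiv j (X i)).

Definition vf_add (R : ringType) (X Y : vfield R) : vfield R := fun i => X i + Y i.
Definition vf_scale (R : ringType) (c : R) (X : vfield R) : vfield R :=
  fun i => c *: X i.

Inductive in_lie_alg (R : ringType) (f0 f1 : vfield R) : vfield R -> Prop :=
  | lie_gen0 : in_lie_alg f0 f1 f0
  | lie_gen1 : in_lie_alg f0 f1 f1
  | lie_add X Y : in_lie_alg f0 f1 X -> in_lie_alg f0 f1 Y ->
      in_lie_alg f0 f1 (vf_add X Y)
  | lie_scale c X : in_lie_alg f0 f1 X -> in_lie_alg f0 f1 (vf_scale c X)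
  | lie_br X Y : in_lie_alg f0 f1 X -> in_lie_alg f0 f1 Y ->
      in_lie_alg f0 f1 (lie_bracket X Y).

Definition vf_eval (R : comRingType) (X : vfield R) (x : 'I_2 -> R) : 'I_2 -> R :=
  fun i => (X i).@[x].

Definition LARC (R : comRingType) (f0 f1 : vfield R) : Prop :=
  forall x v : 'I_2 -> R, exists (k : nat) (Vs : 'I_k -> vfield R) (cs : 'I_k -> R),
    (forall l, in_lie_alg f0 f1 (Vs l)) /\
    forall i, v i = \sum_(l < k) cs l * vf_eval (Vs l) x i.

Definition drift (R : realType) (alpha beta gamma lambda : R) : vfield R :=
  fun i => if (i : nat) == 0%N then beta *: 'X_0
           else (lambda + beta) *: 'X_1 + (alpha / 2) *: ('X_0 * 'X_0)
                + gamma *: 'X_0.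

Definition control_field (R : realType) (a b c : R) : vfield R :=
  fun i => if (i : nat) == 0%N then b%:MP else c%:MP + a *: 'X_0.

(* A polynomial h whose Lie derivatives along f0 and f1 are constant multiples
   of h keeps this property along brackets, hence along the whole generated Lie
   algebra.  At a point where h = 0 and dh <> 0 every field of the Lie algebra
   is then tangent to the curve h = 0, so the rank condition fails.  Write
   A = b alpha + a (lambda - beta) and B = b gamma + c lambda.  For b = 0 the
   line s = 0 is such a curve; for b <> 0 and A = B = 0 so is the parabola
   2bt - 2cs - as^2.  Conversely, for b <> 0 the determinant of f1 and [f1,f0]
   is b (B + A s) and that of f1 and [f1,[f1,f0]] is b^2 A, so one of these
   pairs spans the plane at every point unless A = B = 0. *)

From HB Require Import structures.
From mathcomp Require Import all_boot all_order all_algebra.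
From mathcomp Require Import mpoly.
From mathcomp Require Import reals.
From mathcomp Require Import ring.
Set Implicit Arguments. Unset Strict Implicit. Unset Printing Implicit Defensive.
Import Order.TTheory GRing.Theory Num.Theory.
Local Open Scope ring_scope.

Lemma big_ord2 (V : nmodType) (F : 'I_2 -> V) : \sum_(j < 2) F j = F 0 + F 1.
Proof. by rewrite big_ord_recl big_ord1; congr (F _ + F _); apply: val_inj. Qed.

Lemma half_mul2 (F : numFieldType) (x : F) : x / 2 * 2 = x.
Proof. by rewrite divfK // pnatr_eq0. Qed.

Lemma mderivXU (R : ringType) n (i j : 'I_n) :
  mderiv i ('X_j : {mpoly R[n]}) = (j == i)%:R.
Proof.
rewrite mderivX mnm1E; case: eqP => [->|_]; last by rewrite scale0r.
have -> : (U_(i) - U_(i))%MM = 0%MM by apply/mnmP => k; rewrite mnmBE subnn mnm0E.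
by rewrite mpolyX0 scale1r.
Qed.

Section LieDerivative.
Variable R : comRingType.
Implicit Types (X Y : vfield R) (p h : {mpoly R[2]}).

Definition lie_deriv X p : {mpoly R[2]} := \sum_(j < 2) X j * mderiv j p.

Lemma lie_deriv_bracket X Y p :
  lie_deriv (lie_bracket X Y) p = lie_deriv X (lie_deriv Y p) - lie_deriv Y (lie_deriv X p).
Proof.
rewrite /lie_deriv /lie_bracket !big_ord2 !(mderivD, mderivB, mderivM).
by rewrite [mderiv 1 (mderiv 0 p)]mderiv_comm; ring.
Qed.

Lemma lie_derivDl X Y p : lie_deriv (vf_add X Y) p = lie_deriv X p + lie_deriv Y p.
Proof. by rewrite /lie_deriv /vf_add !big_ord2; ring. Qed.

Lemma lie_derivZl c X p : lie_deriv (vf_scale c X) p = c%:MP * lie_deriv X p.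
Proof. by rewrite /lie_deriv /vf_scale !big_ord2 -!mul_mpolyC; ring. Qed.

Lemma lie_deriv_mulC X c p : lie_deriv X (c%:MP * p) = c%:MP * lie_deriv X p.
Proof. by rewrite /lie_deriv !big_ord2 !mderiv_mulC; ring. Qed.

Lemma meval_lie_deriv X p x :
  (lie_deriv X p).@[x] = \sum_(j < 2) (X j).@[x] * (mderiv j p).@[x].
Proof. by rewrite /lie_deriv !big_ord2 mevalD !mevalM. Qed.

Definition lie_eigen X h := exists m : R, lie_deriv X h = m%:MP * h.

Lemma lie_alg_eigen f0 f1 h : lie_eigen f0 h -> lie_eigen f1 h ->
  forall X, in_lie_alg f0 f1 X -> lie_eigen X h.
Proof.
move=> h0 h1 X; elim=> {X} //
  [X Y _ [mx hX] _ [my hY] | c X _ [mx hX] | X Y _ [mx hX] _ [my hY]].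
- by exists (mx + my); rewrite lie_derivDl hX hY rmorphD /=; ring.
- by exists (c * mx); rewrite lie_derivZl hX rmorphM /=; ring.
- by exists 0; rewrite lie_deriv_bracket hX hY !lie_deriv_mulC hX hY rmorph0; ring.
Qed.

End LieDerivative.

Definition lie_span (R : comRingType) (f0 f1 : vfield R) (x v : 'I_2 -> R) :=
  exists (k : nat) (Vs : 'I_k -> vfield R) (cs : 'I_k -> R),
    (forall l, in_lie_alg f0 f1 (Vs l)) /\
    forall i, v i = \sum_(l < k) cs l * vf_eval (Vs l) x i.

Lemma lie_span_tangent (R : comRingType) (f0 f1 : vfield R) h x v :
  lie_eigen f0 h -> lie_eigen f1 h -> h.@[x] = 0 -> lie_span f0 f1 x v ->
  \sum_(j < 2) v j * (mderiv j h).@[x] = 0.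
Proof.
move=> h0 h1 hx [k [Vs [cs [inVs vE]]]].
under eq_bigr do rewrite vE mulr_suml.
rewrite exchange_big big1 // => l _.
have [m hm] := lie_alg_eigen h0 h1 (inVs l).
have := congr1 (meval x) hm; rewrite mevalM hx mulr0 meval_lie_deriv => tangent.
by under eq_bigr do rewrite -mulrA; rewrite -mulr_sumr tangent mulr0.
Qed.

Lemma not_LARC_of_eigen (R : realDomainType) (f0 f1 : vfield R) h x i :
  lie_eigen f0 h -> lie_eigen f1 h -> h.@[x] = 0 -> (mderiv i h).@[x] != 0 ->
  ~ LARC f0 f1.
Proof.
move=> h0 h1 hx dh_neq0 larc.
pose grad j := (mderiv j h).@[x].
have /eqP := lie_span_tangent h0 h1 hx (larc x grad).
rewrite psumr_eq0 => [/allP/(_ i (mem_index_enum i))|j _]; last by rewrite -expr2 sqr_ge0.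
by rewrite mulf_eq0 orbb (negPf dh_neq0).
Qed.

Definition vf_det (R : comRingType) (X Y : vfield R) (x : 'I_2 -> R) :=
  (X 0).@[x] * (Y 1).@[x] - (X 1).@[x] * (Y 0).@[x].

Lemma LARC_of_det (R : fieldType) (f0 f1 X Y : vfield R) :
  in_lie_alg f0 f1 X -> in_lie_alg f0 f1 Y -> (forall x, vf_det X Y x != 0) ->
  LARC f0 f1.
Proof.
move=> inX inY det_neq0 x v; have := det_neq0 x; rewrite /vf_det => dx.
exists 2, (fun l : 'I_2 => if l == 0 then X else Y).
exists (fun l : 'I_2 => if l == 0
   then (v 0 * (Y 1).@[x] - v 1 * (Y 0).@[x]) / vf_det X Y x
   else ((X 0).@[x] * v 1 - (X 1).@[x] * v 0) / vf_det X Y x).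
split=> [l|i]; first by case: ifP.
have [-> | ->] : i = 0 \/ i = 1.
  by case: i => [[|[|]]] // ?; [left | right]; apply: val_inj.
all: by rewrite big_ord2 /vf_eval /vf_det /=; field.
Qed.

Section Proposition5.
Variables (R : realType) (a b c alpha beta gamma lambda : R).

Local Notation f0 := (drift alpha beta gamma lambda).
Local Notation f1 := (control_field a b c).
Local Notation f10 := (lie_bracket f1 f0).
Local Notation f110 := (lie_bracket f1 f10).
Local Notation A := (b * alpha + a * (lambda - beta)).
Local Notation B := (b * gamma + c * lambda).

Let mderivE := (mderivD, mderivB, mderivN, mderivM, mderivZ, mderivC, mderivXU).

Lemma bracket10_0 : f10 0 = (b * beta)%:MP.
Proof.
by rewrite /lie_bracket big_ord2 /drift /control_field /= !mderivE /= -!mul_mpolyC; ring.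
Qed.

Lemma bracket10_1 :
  f10 1 = (b * gamma + c * (lambda + beta))%:MP + (b * alpha + a * lambda)%:MP * 'X_0.
Proof.
rewrite -[in RHS](half_mul2 alpha) /lie_bracket big_ord2 /drift /control_field /=.
by rewrite !mderivE /= -!mul_mpolyC; ring.
Qed.

Lemma bracket110_0 : f110 0 = 0.
Proof.
rewrite [LHS]/lie_bracket big_ord2 bracket10_0 bracket10_1 /control_field /=.
by rewrite !mderivE /= -!mul_mpolyC; ring.
Qed.

Lemma bracket110_1 : f110 1 = (b * A)%:MP.
Proof.
rewrite [LHS]/lie_bracket big_ord2 bracket10_0 bracket10_1 /control_field /=.
by rewrite !mderivE /= -!mul_mpolyC; ring.
Qed.

Let mevalE := (mevalD, mevalB, mevalN, mevalM, mevalC, mevalZ, mevalXU).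

Lemma det_control_bracket10 x : vf_det f1 f10 x = b * (B + A * x 0).
Proof. by rewrite /vf_det bracket10_0 bracket10_1 /control_field /= !mevalE; ring. Qed.

Lemma det_control_bracket110 x : vf_det f1 f110 x = b ^+ 2 * A.
Proof. by rewrite /vf_det bracket110_0 bracket110_1 /control_field /= !mevalE; ring. Qed.

Lemma lie_alg_bracket10 : in_lie_alg f0 f1 f10.
Proof. exact: lie_br (lie_gen1 _ _) (lie_gen0 _ _). Qed.

Lemma LARC_A_neq0 : b != 0 -> A != 0 -> LARC f0 f1.
Proof.
move=> b_neq0 A_neq0; apply: (LARC_of_det (X := f1) (Y := f110)).
- exact: lie_gen1.
- exact: lie_br (lie_gen1 _ _) lie_alg_bracket10.
- by move=> x; rewrite det_control_bracket110 mulf_neq0 ?expf_neq0.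
Qed.

Lemma LARC_B_neq0 : b != 0 -> A = 0 -> B != 0 -> LARC f0 f1.
Proof.
move=> b_neq0 A0 B_neq0; apply: (LARC_of_det (X := f1) (Y := f10)).
- exact: lie_gen1.
- exact: lie_alg_bracket10.
- by move=> x; rewrite det_control_bracket10 A0 mul0r addr0 mulf_neq0.
Qed.

Lemma drift_eigen_X0 : lie_eigen f0 'X_0.
Proof.
by exists beta; rewrite /lie_deriv big_ord2 /drift /= !mderivXU /= -mul_mpolyC; ring.
Qed.

Lemma control_eigen_X0 : b = 0 -> lie_eigen f1 'X_0.
Proof.
by move=> b0; exists 0; rewrite /lie_deriv big_ord2 /control_field /= !mderivXU /= b0; ring.
Qed.

Lemma not_LARC_b_eq0 : b = 0 -> ~ LARC f0 f1.
Proof.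
move=> b0; apply: (not_LARC_of_eigen (x := fun=> 0) (i := 0) drift_eigen_X0).
- exact: control_eigen_X0.
- by rewrite mevalXU.
- by rewrite mderivXU eqxx meval1 oner_neq0.
Qed.

Definition parabola : {mpoly R[2]} :=
  (2 * b)%:MP * 'X_1 - (2 * c)%:MP * 'X_0 - a%:MP * ('X_0 * 'X_0).

Lemma lie_deriv_drift_parabola : lie_deriv f0 parabola =
  (lambda + beta)%:MP * parabola + A%:MP * ('X_0 * 'X_0) + (2 * B)%:MP * 'X_0.
Proof.
rewrite -[in RHS](half_mul2 alpha) /lie_deriv /parabola big_ord2 /drift /=.
by rewrite !mderivE /= -!mul_mpolyC; ring.
Qed.

Lemma lie_deriv_control_parabola : lie_deriv f1 parabola = 0.
Proof.
rewrite /lie_deriv /parabola big_ord2 /control_field /=.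
by rewrite !mderivE /= -!mul_mpolyC; ring.
Qed.

Lemma mderiv1_parabola : mderiv 1 parabola = (2 * b)%:MP.
Proof. by rewrite /parabola !mderivE /=; ring. Qed.

Lemma not_LARC_AB_eq0 : A = 0 -> B = 0 -> b != 0 -> ~ LARC f0 f1.
Proof.
move=> A0 B0 b_neq0; apply: (not_LARC_of_eigen (h := parabola) (x := fun=> 0) (i := 1)).
- by exists (lambda + beta); rewrite lie_deriv_drift_parabola A0 B0 mulr0; ring.
- by exists 0; rewrite lie_deriv_control_parabola; ring.
- by rewrite /parabola !mevalE; ring.
- by rewrite mderiv1_parabola mevalC mulf_neq0 ?pnatr_eq0.
Qed.

End Proposition5.

Theorem proposition5 (R : realType) (a b c alpha beta gamma lambda : R)
  (Hag : gamma != 0 -> alpha = 0)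
  (omega_min omega_max : R) (HOmega : omega_min < 0 < omega_max) :
  LARC (drift alpha beta gamma lambda) (control_field a b c) <->
  b * ((b * alpha + a * (lambda - beta)) ^+ 2 + (b * gamma + c * lambda) ^+ 2) != 0.
Proof.
have [b0 | b_neq0] := eqVneq b 0.
  split=> [larc | ]; first by case: (not_LARC_b_eq0 b0 larc).
  by rewrite b0 mul0r eqxx.
rewrite mulf_eq0 (negPf b_neq0) /= paddr_eq0 ?sqr_ge0 // !sqrf_eq0.
have [A0 | A_neq0] := eqVneq (b * alpha + a * (lambda - beta)) 0; last first.
  by split=> // _; exact: LARC_A_neq0.
have [B0 | B_neq0] := eqVneq (b * gamma + c * lambda) 0.
  by split=> // larc; case: (not_LARC_AB_eq0 A0 B0 b_neq0 larc).
by split=> // _; exact: LARC_B_neq0.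
Qed.
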